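(* Let $p\geq 3$ be a prime and $k$ a positive integer, and suppose that the sequence $\big(\nu_{p}(A_{p,k}(n))\big)_{n\in\mathbb{N}}$ is eventually constant and equal to $1$. Then: (a) if $p-1\mid k$, then $p\nmid k$; (b) if $p-1\nmid k$, $k=(p-1)k'+q$ for some integer $k'$ and some $q\in\{1,\ldots,p-2\}$, and $p\mid k'+1$, then $p^{2}\nmid k'+1$.
   Context: For an integer $m\geq 2$ and a positive integer $k$, the integers $A_{m,k}(n)$, $n\in\mathbb{N}=\{0,1,2,\ldots\}$, are defined by the formal power series identity $\prod_{i=0}^{\infty}\big(1-x^{m^{i}}\big)^{-k}=\sum_{n=0}^{\infty}A_{m,k}(n)x^{n}$. For a prime $p$, $\nu_p(n)$ denotes the $p$-adic valuation of the integer $n$, with $\nu_p(0)=+\infty$. *)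

From mathcomp Require Import all_boot all_order all_algebra.
Set Implicit Arguments. Unset Strict Implicit. Unset Printing Implicit Defensive.
Import GRing.Theory Num.Theory.
Local Open Scope ring_scope.

(* Truncation to degree N (coefficients of x^0..x^N) of the power series
   (1 - x^d)^{-k} = \sum_{j>=0} C(j+k-1, j) x^{j d}. *)
Definition inv_factor_trunc (N d k : nat) : {poly int} :=
  \sum_(j < N.+1) ('C(j + k - 1, j))%:R *: 'X^(j * d).

(* A_{m,k}(n) : coefficient of x^n in prod_{i>=0} (1 - x^{m^i})^{-k}.
   For m >= 2 and i >= n+1 we have m^i > n, so only the factors i <= n
   and only the terms of degree <= n matter for the coefficient of x^n. *)
Definition A (m k n : nat) : int :=
  (\prod_(i < n.+1) inv_factor_trunc n (m ^ i) k)`_n.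

Definition nu (p : nat) (a : int) : nat := logn p `|a|%N.

(* Modulo x^(n+1) the generating series is the inverse of U = prod_(i<=n) (1 - x^(p^i))^k.
   Modulo p, (1 - x)^(p^i) = 1 - x^(p^i), so U = (1 - x)^(k (1 + p + ... + p^n)), and
   (1 - x)^(p^M) = 1 modulo (p, x^M).  If p divides A(n) for all large n, the series
   is a polynomial P modulo p; raising P U = 1 to the power p - 1 yields P^(p-1) = (1 - x)^k
   in F_p[x], and comparing degrees gives p - 1 | k, so the hypotheses of (b) never hold.
   If moreover k = (p - 1) e with p | e, the same computation modulo p^2, using that
   a = b mod p implies a^p = b^p mod p^2, shows that the series is (1 - x)^e modulo
   (p^2, x^(n+1)); hence p^2 divides A(n) for n > e, contradicting nu_p(A(n)) = 1. *)

From mathcomp Require Import all_boot all_order all_algebra.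
From mathcomp Require Import ring zify.
Import GRing.Theory.
Local Open Scope ring_scope.
Set Implicit Arguments. Unset Strict Implicit. Unset Printing Implicit Defensive.

Section CongruenceModN.

Variable R : comPzRingType.
Implicit Types (a b c y : R) (m n : nat).

Definition eqmodn m a b := exists c, a - b = m%:R * c.

Lemma eqmodn_refl m a : eqmodn m a a.
Proof. by exists 0; rewrite subrr mulr0. Qed.

Lemma eqmodn_sym m a b : eqmodn m a b -> eqmodn m b a.
Proof. by move=> [c e]; exists (- c); rewrite mulrN -e opprB. Qed.

Lemma eqmodn_trans m a b c : eqmodn m a b -> eqmodn m b c -> eqmodn m a c.
Proof. by move=> [d e] [d' e']; exists (d + d'); rewrite mulrDr -e -e' addrA subrK. Qed.

Lemma eqmodnX m a b n : eqmodn m a b -> eqmodn m (a ^+ n) (b ^+ n).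
Proof.
move=> [c e]; exists (c * \sum_(i < n) a ^+ (n.-1 - i) * b ^+ i).
by rewrite subrXX e mulrA.
Qed.

Lemma eqmodnM m a b c d : eqmodn m a b -> eqmodn m c d -> eqmodn m (a * c) (b * d).
Proof.
move=> [e1 h1] [e2 h2]; exists (e1 * c + b * e2).
have -> : a * c - b * d = (a - b) * c + b * (c - d) by ring.
by rewrite h1 h2; ring.
Qed.

Lemma exprD_first_order b c m n : exists r,
  (b + m%:R * c) ^+ n.+1 = b ^+ n.+1 + n.+1%:R * m%:R * c * b ^+ n + m%:R * m%:R * r.
Proof.
elim: n => [|n [r IH]]; first by exists 0; ring.
exists (n.+1%:R * c * c * b ^+ n + r * (b + m%:R * c)).
rewrite [in LHS]exprS IH [b ^+ n.+2]exprS [b ^+ n.+1]exprS -[n.+2%:R]natr1 -[n.+1%:R]natr1.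
ring.
Qed.

Lemma eqmodn_lift m a b : eqmodn m a b -> eqmodn (m * m) (a ^+ m) (b ^+ m).
Proof.
case: m => [|m] [c e]; first by rewrite !expr0; apply: eqmodn_refl.
have -> : a = b + m.+1%:R * c by rewrite -e addrC subrK.
have [r ->] := exprD_first_order b c m.+1 m.
by exists (c * b ^+ m + r); rewrite natrM; ring.
Qed.

Lemma eqmodn_liftX m a b n : (m %| n)%N -> eqmodn m a b -> eqmodn (m * m) (a ^+ n) (b ^+ n).
Proof. by move=> /dvdnP[q ->] /eqmodn_lift/(eqmodnX q); rewrite mulnC !exprM. Qed.

Lemma eqmodn_frobenius p a b : prime p -> eqmodn p ((a + b) ^+ p) (a ^+ p + b ^+ p).
Proof.
move=> /[dup] pp /prime_gt0; case: p pp => // p pp _.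
rewrite /eqmodn exprDn big_ord_recr big_ord_recl /= subnn bin0 binn subn0 !expr0 !mulr1 mul1r.
set S := \sum_(i < p) _.
have -> : a ^+ p.+1 + S + b ^+ p.+1 - (a ^+ p.+1 + b ^+ p.+1) = S by ring.
rewrite /S; elim/big_ind: _ => [|x y [c ->] [d ->]|i _]; first by exists 0; rewrite mulr0.
  by exists (c + d); rewrite mulrDr.
have /dvdnP[q ->] : (p.+1 %| 'C(p.+1, bump 0 i))%N by apply: prime_dvd_bin; rewrite // ltnS ltn_ord.
by exists (a ^+ (p.+1 - bump 0 i) * b ^+ bump 0 i *+ q); rewrite mulr_natl -mulrnA mulnC.
Qed.

Lemma eqmodn_one_subr_expn p y i : prime p -> eqmodn p ((1 - y) ^+ (p ^ i)) (1 - y ^+ (p ^ i)).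
Proof.
move=> pp; elim: i => [|i IH]; first by rewrite !expn0 !expr1; apply: eqmodn_refl.
rewrite expnSr !exprM; apply: eqmodn_trans (eqmodnX p IH) _.
have [c e] := eqmodn_frobenius (1 - y ^+ (p ^ i)) (y ^+ (p ^ i)) pp.
by exists (- c); rewrite mulrN -e subrK expr1n; ring.
Qed.

End CongruenceModN.

Section CongruenceModNXn.

Variable R : comNzRingType.
Implicit Types (a b c d : {poly R}) (m M n : nat).

Definition eqmod_trunc m M a b := exists c d, a - b = m%:R * c + 'X^M * d.

Lemma eqmod_trunc_refl m M a : eqmod_trunc m M a a.
Proof. by exists 0, 0; rewrite subrr !mulr0 addr0. Qed.

Lemma eqmod_trunc_sym m M a b : eqmod_trunc m M a b -> eqmod_trunc m M b a.
Proof. by move=> [c [d e]]; exists (- c), (- d); rewrite !mulrN -opprD -e opprB. Qed.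

Lemma eqmod_trunc_trans m M a b c :
  eqmod_trunc m M a b -> eqmod_trunc m M b c -> eqmod_trunc m M a c.
Proof.
move=> [c1 [d1 e1]] [c2 [d2 e2]]; exists (c1 + c2), (d1 + d2).
have -> : a - c = (a - b) + (b - c) by ring.
by rewrite e1 e2; ring.
Qed.

Lemma eqmod_truncM m M a b c d :
  eqmod_trunc m M a b -> eqmod_trunc m M c d -> eqmod_trunc m M (a * c) (b * d).
Proof.
move=> [c1 [d1 e1]] [c2 [d2 e2]]; exists (c1 * c + b * c2), (d1 * c + b * d2).
have -> : a * c - b * d = (a - b) * c + b * (c - d) by ring.
by rewrite e1 e2; ring.
Qed.

Lemma eqmod_truncX m M a b n : eqmod_trunc m M a b -> eqmod_trunc m M (a ^+ n) (b ^+ n).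
Proof.
move=> e; elim: n => [|n IH]; first exact: eqmod_trunc_refl.
by rewrite !exprS; apply: eqmod_truncM.
Qed.

Lemma eqmod_trunc_of_eqmodn m M a b : eqmodn m a b -> eqmod_trunc m M a b.
Proof. by move=> [c e]; exists c, 0; rewrite mulr0 addr0. Qed.

Lemma eqmod_trunc0 m M a b : eqmod_trunc 0 M a b -> eqmod_trunc m M a b.
Proof. by move=> [c [d e]]; exists 0, d; rewrite e !mulr0 !mul0r. Qed.

Lemma eqmod_trunc_leq m M M' a b : (M <= M')%N -> eqmod_trunc m M' a b -> eqmod_trunc m M a b.
Proof.
move=> le [c [d e]]; exists c, ('X^(M' - M) * d).
by rewrite e mulrA -exprD subnKC.
Qed.

Lemma eqmod_trunc_mulXn m M n a b : (M <= n)%N -> eqmod_trunc m M (b + 'X^n * a) b.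
Proof.
move=> le; apply: (eqmod_trunc_leq le); exists 0, a.
by rewrite addrC addKr mulr0 add0r.
Qed.

Lemma eqmod_trunc_one_subXn m M n k : (M <= n)%N -> eqmod_trunc m M ((1 - 'X^n) ^+ k) 1.
Proof.
move=> le; rewrite -[X in eqmod_trunc _ _ _ X](expr1n _ k); apply: eqmod_truncX.
by rewrite -mulrN1; apply: eqmod_trunc_mulXn.
Qed.

Lemma eqmod_trunc_mul_expr m M a y n e :
  eqmod_trunc m M (a * y ^+ n) 1 -> eqmod_trunc m M (y ^+ (n + e)) 1 -> eqmod_trunc m M a (y ^+ e).
Proof.
move=> ha hy; apply: (@eqmod_trunc_trans _ _ _ (a * y ^+ (n + e))).
  rewrite -[X in eqmod_trunc _ _ X _]mulr1.
  exact: eqmod_truncM (eqmod_trunc_refl _ _ _) (eqmod_trunc_sym hy).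
rewrite exprD mulrA -[X in eqmod_trunc _ _ _ X]mul1r.
exact: eqmod_truncM ha (eqmod_trunc_refl _ _ _).
Qed.

End CongruenceModNXn.

Lemma eqmod_trunc_coef m M (a b : {poly int}) i :
  eqmod_trunc m M a b -> (i < M)%N -> (m%:Z %| a`_i - b`_i)%Z.
Proof.
move=> [c [d e]] lt; rewrite -coefB e coefD coefXnM lt addr0 mulr_natl coefMn -mulr_natr.
by apply: dvdz_mull; rewrite natz.
Qed.

Lemma eqmod_trunc_of_coef m M (a b : {poly int}) :
  (forall i, (i < M)%N -> (m%:Z %| a`_i - b`_i)%Z) -> eqmod_trunc m M a b.
Proof.
move=> h; exists (\poly_(i < M) ((a - b)`_i %/ m%:Z)%Z), (drop_poly M (a - b)).
rewrite -{1}(poly_take_drop M (a - b)) [drop_poly M _ * _]mulrC; congr (_ + _).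
apply/polyP => i; rewrite coef_take_poly mulr_natl coefMn coef_poly.
case: ifP => lt; last by rewrite mul0rn.
by rewrite -mulr_natr natz divzK // coefB h.
Qed.

Lemma eqmod_trunc_map_Fp p M (a b : {poly int}) : prime p ->
  eqmod_trunc p M a b -> (size (a - b)%R <= M)%N ->
  map_poly (intr : int -> 'F_p) a = map_poly intr b.
Proof.
move=> pp [c [d e]] sz; set phi := map_poly (intr : int -> 'F_p).
have szM : (size (phi a - phi b)%R <= M)%N.
  by rewrite -rmorphB; apply: leq_trans sz; exact: size_poly.
have phiE : phi a - phi b = 'X^M * phi d.
  rewrite -rmorphB e rmorphD !rmorphM /= map_polyXn rmorph_nat -polyC_natr pchar_Fp_0 //.
  by rewrite polyC0 mul0r add0r.
apply/eqP; rewrite -subr_eq0 phiE; rewrite phiE in szM.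
have [-> |nz] := eqVneq (phi d) 0; first by rewrite mulr0.
by move: szM; rewrite mulrC size_mulXn // -{2}[M]addn0 leq_add2l leqn0 size_poly_eq0 (negPf nz).
Qed.

Section NegBinomialSeries.

Variable R : comPzRingType.
Implicit Types (y : R) (N k : nat).

Definition neg_binom_trunc y N k := \sum_(j < N.+1) 'C(j + k - 1, j)%:R * y ^+ j.

Lemma neg_binom_truncS y N k :
  (1 - y) * neg_binom_trunc y N k.+1 = neg_binom_trunc y N k - 'C(N + k, N)%:R * y ^+ N.+1.
Proof.
rewrite /neg_binom_trunc; elim: N => [|N IH].
  by rewrite !big_ord1 !bin0 expr0 expr1; ring.
rewrite big_ord_recr /= [in RHS]big_ord_recr /= mulrDr IH.
have -> : (N.+1 + k.+1 - 1 = (N + k).+1)%N by lia.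
have -> : (N.+1 + k - 1 = N + k)%N by lia.
rewrite addSn binS natrD !exprS; ring.
Qed.

Lemma neg_binom_trunc_inverse y N k :
  exists r, (1 - y) ^+ k * neg_binom_trunc y N k = 1 + y ^+ N.+1 * r.
Proof.
elim: k => [|k [r IH]].
  exists 0; rewrite expr0 mul1r mulr0 addr0 /neg_binom_trunc big_ord_recl /= big1 => [|i _].
    by rewrite bin0 expr0 mulr1 addr0.
  by rewrite bin_small ?mul0r // addn0 /bump /= add1n subn1.
exists (r - 'C(N + k, N)%:R * (1 - y) ^+ k).
by rewrite exprSr -mulrA neg_binom_truncS mulrBr IH; ring.
Qed.

End NegBinomialSeries.

Lemma geom_sum_mul_predn p n : (0 < p)%N -> (((\sum_(i < n) p ^ i) * (p - 1)).+1 = p ^ n)%N.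
Proof. by move=> p0; rewrite mulnC subn1 -predn_exp prednK // expn_gt0 p0. Qed.

Lemma size_one_subX (R : nzRingType) : size (1 - 'X : {poly R}) = 2.
Proof. by rewrite -opprB size_polyN -polyC1 size_XsubC. Qed.

Lemma inv_factor_truncE N d k : inv_factor_trunc N d k = neg_binom_trunc 'X^d N k.
Proof.
by apply: eq_bigr => j _; rewrite scaler_nat mulr_natl mulnC exprM.
Qed.

Lemma inv_factor_trunc_mul N d k : (0 < d)%N ->
  eqmod_trunc 0 N.+1 (inv_factor_trunc N d k * (1 - 'X^d) ^+ k) 1.
Proof.
move=> d0; rewrite inv_factor_truncE mulrC.
have [r ->] := neg_binom_trunc_inverse ('X^d : {poly int}) N k.
rewrite -exprM; apply: eqmod_trunc_mulXn.
by rewrite leq_pmull.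
Qed.

Section GeneratingSeries.

Variables p k : nat.

Definition A_poly n : {poly int} := \prod_(i < n.+1) inv_factor_trunc n (p ^ i) k.
Definition A_denom n : {poly int} := \prod_(i < n.+1) (1 - 'X^(p ^ i)) ^+ k.

Lemma A_poly_mul_denom n : (0 < p)%N -> eqmod_trunc 0 n.+1 (A_poly n * A_denom n) 1.
Proof.
move=> p0; rewrite -big_split /=.
elim/big_ind: _ => [|a b ha hb|i _]; first exact: eqmod_trunc_refl.
  by rewrite -[1](mulr1 1); apply: eqmod_truncM.
by apply: inv_factor_trunc_mul; rewrite expn_gt0 p0.
Qed.

Lemma A_denom_eqmod j n : (1 < p)%N -> (j <= n)%N -> eqmod_trunc 0 j.+1 (A_denom n) (A_denom j).
Proof.
move=> p1 /subnKC <-; elim: (n - j)%N => [|d IH]; first by rewrite addn0; apply: eqmod_trunc_refl.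
rewrite addnS /A_denom big_ord_recr /= -[X in eqmod_trunc _ _ _ X]mulr1.
apply: eqmod_truncM IH _; apply: eqmod_trunc_one_subXn; apply: ltnW.
by apply: leq_ltn_trans (ltn_expl _ p1); rewrite ltnS leq_addr.
Qed.

Lemma A_poly_eqmod j n : (1 < p)%N -> (j <= n)%N -> eqmod_trunc 0 j.+1 (A_poly n) (A_poly j).
Proof.
move=> p1 le; have p0 := ltnW p1.
have hn : eqmod_trunc 0 j.+1 (A_poly n * A_denom n) 1.
  by apply: eqmod_trunc_leq (A_poly_mul_denom n p0).
have hj := A_poly_mul_denom j p0.
apply: (@eqmod_trunc_trans _ _ _ _ (A_poly n * A_denom j * A_poly j)).
  rewrite -mulrA -[X in eqmod_trunc _ _ X _]mulr1; apply: eqmod_truncM (eqmod_trunc_refl _ _ _) _.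
  by rewrite mulrC; apply: eqmod_trunc_sym.
rewrite -[X in eqmod_trunc _ _ _ X]mul1r; apply: eqmod_truncM (eqmod_trunc_refl _ _ _).
apply: eqmod_trunc_trans hn; apply: eqmod_truncM (eqmod_trunc_refl _ _ _) _.
by apply: eqmod_trunc_sym; apply: A_denom_eqmod.
Qed.

Lemma coef_A_poly j n : (1 < p)%N -> (j <= n)%N -> (A_poly n)`_j = A p k j.
Proof.
move=> p1 le; apply/eqP; rewrite -subr_eq0 -dvd0z.
exact: eqmod_trunc_coef (A_poly_eqmod p1 le) (ltnSn j).
Qed.

Lemma A_denom_eqmodn m n :
  (forall i, eqmodn m ((1 - 'X^(p ^ i) : {poly int}) ^+ k) ((1 - 'X) ^+ (p ^ i * k))) ->
  eqmodn m (A_denom n) ((1 - 'X) ^+ ((\sum_(i < n.+1) p ^ i) * k)).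
Proof.
move=> h; rewrite (big_distrl k) /= -prodrXr.
by apply: (big_ind2 (eqmodn m)) => [|a b c d|i _]; [apply: eqmodn_refl | apply: eqmodnM | apply: h].
Qed.

Lemma A_poly_mul_one_subX m n : (0 < p)%N ->
  (forall i, eqmodn m ((1 - 'X^(p ^ i) : {poly int}) ^+ k) ((1 - 'X) ^+ (p ^ i * k))) ->
  eqmod_trunc m n.+1 (A_poly n * (1 - 'X) ^+ ((\sum_(i < n.+1) p ^ i) * k)) 1.
Proof.
move=> p0 /(A_denom_eqmodn n) hU.
apply: eqmod_trunc_trans (eqmod_trunc0 m (A_poly_mul_denom n p0)).
exact/eqmod_truncM/eqmod_trunc_sym/eqmod_trunc_of_eqmodn/hU/eqmod_trunc_refl.
Qed.

End GeneratingSeries.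

Lemma dvdn_of_eqmod_trunc_exp p M q k (P : {poly int}) : prime p ->
  ((size P).-1 * q < M)%N -> (k < M)%N ->
  eqmod_trunc p M (P ^+ q) ((1 - 'X) ^+ k) -> (q %| k)%N.
Proof.
move=> pp szP szk hPk.
have := eqmod_trunc_map_Fp pp hPk (leq_trans (size_polyD _ _) _).
rewrite size_polyN geq_max (leq_trans (size_poly_exp_leq _ _) szP).
rewrite (leq_trans (size_poly_exp_leq _ _) _) ?size_one_subX ?mul1n // => /(_ isT).
rewrite !rmorphXn rmorphB rmorph1 /= map_polyX.
move=> /(congr1 (fun q : {poly 'F_p} => (size q).-1)) /=.
by rewrite !size_exp size_one_subX mul1n => <-; apply: dvdn_mull.
Qed.

Lemma dvdn_pred_of_eventually_dvd_A p k N : prime p ->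
  (forall n, (N <= n)%N -> (p%:Z %| A p k n)%Z) -> (p - 1 %| k)%N.
Proof.
move=> pp hA; have p0 := prime_gt0 pp.
set n := (N * p + k)%N; set M := n.+1; set P := \poly_(i < N) A p k i.
have hB : eqmod_trunc p M (A_poly p k n) P.
  apply: eqmod_trunc_of_coef => i lt; rewrite coef_poly coef_A_poly ?prime_gt1 //.
  by case: ifP => [_|/negbT]; [rewrite subrr dvdz0 | rewrite -leqNgt subr0 => /hA].
have hPU : eqmod_trunc p M (P * (1 - 'X) ^+ ((\sum_(i < M) p ^ i) * k)) 1.
  apply: eqmod_trunc_trans (A_poly_mul_one_subX n p0 _) => [|i].
    exact/eqmod_truncM/eqmod_trunc_refl/eqmod_trunc_sym.
  by rewrite exprM; apply/eqmodnX/eqmodn_sym/eqmodn_one_subr_expn.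
apply: (@dvdn_of_eqmod_trunc_exp p M _ _ P pp).
- rewrite ltnS (leq_trans _ (leq_addr k _)) // leq_mul ?leq_subr //.
  exact: leq_trans (leq_pred _) (size_poly _ _).
- by rewrite ltnS leq_addl.
apply: (@eqmod_trunc_mul_expr _ _ _ _ _ ((\sum_(i < M) p ^ i) * k * (p - 1))).
  by move: (eqmod_truncX (p - 1) hPU); rewrite expr1n exprMn -exprM.
rewrite mulnAC -mulSnr geom_sum_mul_predn // exprM.
apply: eqmod_trunc_trans (eqmod_trunc_one_subXn _ p k (ltnW (ltn_expl M (prime_gt1 pp)))).
exact/eqmod_trunc_of_eqmodn/eqmodnX/eqmodn_one_subr_expn.
Qed.

Lemma sq_dvd_A p k t n : prime p -> k = ((p - 1) * (p * t))%N -> (p * t < n)%N ->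
  ((p ^ 2)%:Z %| A p k n)%Z.
Proof.
move=> pp hk lt; have p0 := prime_gt0 pp; set e := (p * t)%N; set M := n.+1.
have pe : (p %| e)%N by apply: dvdn_mulr.
have hBU : eqmod_trunc (p * p) M (A_poly p k n * (1 - 'X) ^+ ((\sum_(i < M) p ^ i) * k)) 1.
  apply: A_poly_mul_one_subX p0 _ => i; rewrite exprM.
  apply: eqmodn_liftX; first by rewrite hk dvdn_mull.
  exact/eqmodn_sym/eqmodn_one_subr_expn.
have hB : eqmod_trunc (p * p) M (A_poly p k n) ((1 - 'X) ^+ e).
  apply: (eqmod_trunc_mul_expr hBU).
  rewrite hk mulnA -mulSnr geom_sum_mul_predn // exprM.
  apply: eqmod_trunc_trans (eqmod_trunc_one_subXn _ _ e (ltnW (ltn_expl M (prime_gt1 pp)))).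
  exact/eqmod_trunc_of_eqmodn/eqmodn_liftX/eqmodn_one_subr_expn.
have := eqmod_trunc_coef hB (ltnSn n); rewrite mulnn.
rewrite [X in _ - X]nth_default ?subr0 //.
by apply: leq_trans (size_poly_exp_leq _ _) _; rewrite size_one_subX mul1n.
Qed.

Theorem corollary3p4 (p k : nat) :
  prime p -> (3 <= p)%N -> (0 < k)%N ->
  (exists N : nat, forall n : nat, (N <= n)%N ->
      A p k n != 0 /\ nu p (A p k n) = 1%N) ->
  (((p - 1) %| k)%N -> ~~ (p %| k)%N) /\
  (forall k' q : nat, ~~ ((p - 1) %| k)%N -> (1 <= q <= p - 2)%N ->
      k = ((p - 1) * k' + q)%N -> (p %| k'.+1)%N -> ~~ (p ^ 2 %| k'.+1)%N).
Proof.
(* The argument works for every prime p and every k. *)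
move=> pp _ _ [N hN].
have dvd_A n : (N <= n)%N -> (p%:Z %| A p k n)%Z.
  by move=> /hN[nz nu1]; rewrite dvdzE -(expn1 p) pfactor_dvdn ?absz_gt0 // -/(nu p _) nu1.
have pk := dvdn_pred_of_eventually_dvd_A pp dvd_A.
split=> [_|k' q]; last by rewrite pk.
apply/negP => pk'; have [e ke] := dvdnP pk.
have /dvdnP[t eE] : (p %| e)%N.
  rewrite -(@Gauss_dvdl p e (p - 1)) -?ke //.
  by rewrite subn1 -{1}(prednK (prime_gt0 pp)) coprimeSn.
have kE : k = ((p - 1) * (p * t))%N by rewrite ke eE mulnC (mulnC t).
have [nz nu1] := hN (N + (p * t).+1) (leq_addr _ _).
move: (sq_dvd_A pp kE (ltn_addl N (ltnSn _))).
by rewrite dvdzE pfactor_dvdn ?absz_gt0 // -/(nu p _) nu1.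
Qed.
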